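(* Let $t\ge2$, $k\ge 2$, and let $C$ be a binary linear $t$-CIS $[tk,k]$ code. Then $C$ is equivalent (by a permutation of coordinates) to a $t$-CIS $[tk,k]$ code $C_1$ which is obtained from some $t$-CIS $[t(k-1),k-1]$ code by the building up construction; that is, there exist invertible $(k-1)\times(k-1)$ matrices $A_1,\dots,A_t$ over $\mathbb{F}_2$ such that $(A_1\ \cdots\ A_t)$ generates a $t$-CIS $[t(k-1),k-1]$ code, and choices of $\mathbf x_j\in\mathbb{F}_2^{k-1}$, $y_{ij}\in\mathbb{F}_2$, such that $C_1$ is generated by the matrix $G_1$ of the building up construction.
   Context: Building up construction: given invertible $m\times m$ matrices $A_1,\dots,A_t$ over $\mathbb{F}_2$ with rows $A_j(\mathbf r_1),\dots,A_j(\mathbf r_m)$, vectors $\mathbf x_j\in\mathbb{F}_2^m$ and bits $y_{ij}$ ($1\le i\le m$, $1\le j\le t$), let $c_{ij}\in\mathbb{F}_2$ be the unique elements with $\mathbf x_j=\sum_i c_{ij}A_j(\mathbf r_i)$ and $z_j=1+\sum_i c_{ij}y_{ij}$; $G_1$ is the $(m+1)\times t(m+1)$ matrix whose first row is $(z_1,\mathbf x_1,z_2,\mathbf x_2,\dots,z_t,\mathbf x_t)$ and whose $(i+1)$-th row is $(y_{i1},A_1(\mathbf r_i),y_{i2},A_2(\mathbf r_i),\dots,y_{it},A_t(\mathbf r_i))$. A binary linear $[tk,k]$ code is $t$-CIS if its coordinate set can be partitioned into $t$ pairwise disjoint information sets, an information set being a set of $k$ coordinates whose columns in a generator matrix are linearly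 independent. *)

From HB Require Import structures.
From mathcomp Require Import all_boot all_order all_algebra all_fingroup.
Set Implicit Arguments. Unset Strict Implicit. Unset Printing Implicit Defensive.
Import GRing.Theory.
Local Open Scope ring_scope.

(* Coordinates of F_2^(t*n) are grouped into t consecutive blocks of size n:
   coordinate c lies in block c %/ n at offset c %% n. *)
Lemma blk_proof (t n : nat) (c : 'I_(t * n)) : (c %/ n < t)%N.
Proof.
case: n c => [|n] c; first by case: c => c; rewrite muln0.
by rewrite ltn_divLR // ltn_ord.
Qed.

Lemma off_proof (t n : nat) (c : 'I_(t * n)) : (c %% n < n)%N.
Proof.
case: n c => [|n] c; first by case: c => c; rewrite muln0.
by rewrite ltn_pmod.
Qed.

Definition blk (t n : nat) (c : 'I_(t * n)) : 'I_t := Ordinal (blk_proof c).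
Definition off (t n : nat) (c : 'I_(t * n)) : 'I_n := Ordinal (off_proof c).

Definition catblocks (R : Type) (r t n : nat) (B : 'I_t -> 'M[R]_(r, n))
  : 'M[R]_(r, t * n) := \matrix_(i, c) B (blk c) i (off c).

Definition info_set (k n : nat) (G : 'M['F_2]_(k, n)) (S : {set 'I_n}) : bool :=
  (#|S| == k) &&
  (\rank (colsub (fun i : 'I_#|S| => enum_val (A := mem S) i) G) == #|S|).

Definition CIS (t k : nat) (G : 'M['F_2]_(k, t * k)) : Prop :=
  exists P : 'I_(t * k) -> 'I_t,
    forall j : 'I_t, info_set G [set c | P c == j].

(* Building-up construction, with m = k - 1. *)
Definition bu_c (m : nat) (A : 'M['F_2]_m) (x : 'rV['F_2]_m) : 'rV['F_2]_m :=
  x *m invmx A.   (* the unique c with x = sum_i c_i A(r_i) *)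

Definition bu_z (t m : nat) (A : 'I_t -> 'M['F_2]_m) (x : 'I_t -> 'rV['F_2]_m)
  (y : 'I_m -> 'I_t -> 'F_2) (j : 'I_t) : 'F_2 :=
  1 + \sum_(i < m) bu_c (A j) (x j) 0 i * y i j.

(* block j of G_1 :   ( z_j  x_j )
                      ( y_.j A_j ) *)
Definition bu_block (t m : nat) (A : 'I_t -> 'M['F_2]_m) (x : 'I_t -> 'rV['F_2]_m)
  (y : 'I_m -> 'I_t -> 'F_2) (j : 'I_t) : 'M['F_2]_(m.+1, m.+1) :=
  \matrix_(i, l)
    match unlift ord0 i, unlift ord0 l with
    | None, None => bu_z A x y j
    | None, Some l' => x j 0 l'
    | Some i', None => y i' j
    | Some i', Some l' => A j i' l'
    end.

Definition building_up (t m : nat) (A : 'I_t -> 'M['F_2]_m)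
  (x : 'I_t -> 'rV['F_2]_m) (y : 'I_m -> 'I_t -> 'F_2)
  : 'M['F_2]_(m.+1, t * m.+1) := catblocks (bu_block A x y).

From HB Require Import structures.
From mathcomp Require Import all_boot all_order all_algebra all_fingroup.
Set Implicit Arguments. Unset Strict Implicit. Unset Printing Implicit Defensive.
Import GRing.Theory.
Local Open Scope ring_scope.

(* Enumerating the t disjoint information sets of G cuts a column permutation
   of G into t invertible square blocks. Expanding the determinant of a block
   along its first row yields a column whose removal, together with the first
   row, leaves an invertible minor A_j; moving that column to the front puts
   the block in the shape (z_j x_j / y_j A_j). The Schur complement
   z_j - x_j A_j^-1 y_j of an invertible block is nonzero, hence 1 over F_2,
   which is precisely the building-up formula for z_j. So the permuted G is
   G_1 itself, and (A_1 ... A_t) is t-CIS since every A_j is invertible. *)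

Section ColsubRank.
Variables (R : fieldType) (k n : nat) (G : 'M[R]_(k, n)).

Lemma mxrank_colsub_le p (f : 'I_p -> 'I_n) : (\rank (colsub f G) <= \rank G)%N.
Proof. by rewrite -mxrank_tr -[X in (_ <= X)%N]mxrank_tr trmx_mxsub mxrankS ?rowsub_sub. Qed.

Lemma mxrank_colsub_sub p q (f : 'I_p -> 'I_n) (g : 'I_q -> 'I_n) :
  (forall a, exists b, f a = g b) -> (\rank (colsub f G) <= \rank (colsub g G))%N.
Proof.
move=> fg; rewrite -mxrank_tr -[X in (_ <= X)%N]mxrank_tr !trmx_mxsub mxrankS //.
by apply/row_subP => a; rewrite row_rowsub; have [b ->] := fg a; rewrite -row_rowsub row_sub.
Qed.

Lemma mxrank_colsub_img p q (f : 'I_p -> 'I_n) (g : 'I_q -> 'I_n) :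
  (forall a, exists b, f a = g b) -> (forall b, exists a, g b = f a) ->
  \rank (colsub f G) = \rank (colsub g G).
Proof. by move=> fg gf; apply/eqP; rewrite eqn_leq !mxrank_colsub_sub. Qed.

End ColsubRank.

Lemma col_perm_unitmx (R : comUnitRingType) n (s : 'S_n) (B : 'M[R]_n) :
  (col_perm s B \in unitmx) = (B \in unitmx).
Proof. by rewrite col_permE unitmx_mul unitmx_perm andbT. Qed.

Section Blocks.
Variables t n : nat.

Lemma idx_proof (j : 'I_t) (l : 'I_n) : (j * n + l < t * n)%N.
Proof.
apply: (@leq_trans (j * n + n)); first by rewrite ltn_add2l.
by rewrite -mulSnr leq_mul2r ltn_ord orbT.
Qed.

Definition idx (j : 'I_t) (l : 'I_n) : 'I_(t * n) := Ordinal (idx_proof j l).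

Lemma blk_idx j l : blk (idx j l) = j.
Proof.
apply/val_inj => /=; rewrite divnDl ?dvdn_mull // mulnK; last by case: n l => [[]|].
by rewrite divn_small ?addn0.
Qed.

Lemma off_idx j l : off (idx j l) = l.
Proof. by apply/val_inj; rewrite /= modnMDl modn_small. Qed.

Lemma idx_blk_off (c : 'I_(t * n)) : idx (blk c) (off c) = c.
Proof. by apply/val_inj; rewrite /= -divn_eq. Qed.

Lemma colsub_idx_catblocks (R : Type) r (B : 'I_t -> 'M[R]_(r, n)) j :
  colsub (idx j) (catblocks B) = B j.
Proof. by apply/matrixP => i l; rewrite !mxE blk_idx off_idx. Qed.

Lemma perm_of_blocks (P : 'I_(t * n) -> 'I_t) (f : 'I_t -> 'I_n -> 'I_(t * n)) :
  (forall j l, P (f j l) = j) -> (forall j, injective (f j)) ->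
  exists s : 'S_(t * n), forall c, s c = f (blk c) (off c).
Proof.
move=> Pf finj.
have inj : injective (fun c => f (blk c) (off c)).
  move=> c c' eqf; have eqb : blk c = blk c' by rewrite -[blk c](Pf _ (off c)) eqf Pf.
  move: eqf; rewrite eqb => /finj eqo.
  by rewrite -(idx_blk_off c) -(idx_blk_off c') eqb eqo.
by exists (perm inj) => c; rewrite permE.
Qed.

Lemma row_free_catblocks (R : fieldType) r (B : 'I_t -> 'M[R]_(r, n)) j :
  row_free (B j) -> row_free (catblocks B).
Proof.
rewrite /row_free => /eqP freeB; rewrite eqn_leq rank_leq_row -[X in (X <= _)%N]freeB.
by rewrite -(colsub_idx_catblocks B j) mxrank_colsub_le.
Qed.

Lemma info_set_blk (B : 'I_t -> 'M['F_2]_n) j :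
  info_set (catblocks B) [set c | blk c == j] = (B j \in unitmx).
Proof.
have blkE : [set c | @blk t n c == j] = idx j @: 'I_n.
  apply/setP => c; rewrite inE; apply/eqP/imsetP => [<-|[l _ ->]].
    by exists (off c); rewrite ?idx_blk_off.
  by rewrite blk_idx.
have idx_inj : injective (idx j) by move=> l l' /(congr1 (@off t n)); rewrite !off_idx.
have cardE : #|[set c | @blk t n c == j]| = n by rewrite blkE card_imset ?card_ord.
have rankE : \rank (colsub (fun a => enum_val (A := mem [set c | @blk t n c == j]) a)
    (catblocks B)) = \rank (B j).
  rewrite -(colsub_idx_catblocks B j); apply: mxrank_colsub_img => [a|l].
    move: (enum_val a) (enum_valP a) => c; rewrite inE => /eqP <-.
    by exists (off c); rewrite idx_blk_off.
  have jl : idx j l \in [set c | @blk t n c == j] by rewrite inE blk_idx.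
  by exists (enum_rank_in jl (idx j l)); rewrite enum_rankK_in.
by rewrite /info_set rankE cardE eqxx -row_free_unit.
Qed.

Lemma CIS_catblocks (B : 'I_t -> 'M['F_2]_n) :
  (forall j, B j \in unitmx) -> CIS (catblocks B).
Proof. by move=> uB; exists (@blk t n) => j; rewrite info_set_blk. Qed.

End Blocks.

Lemma info_set_enum k n (G : 'M['F_2]_(k, n)) (S : {set 'I_n}) : info_set G S ->
  exists e : 'I_k -> 'I_n, [/\ injective e, forall l, e l \in S & colsub e G \in unitmx].
Proof.
case/andP => /eqP cardS /eqP rankS.
pose e l := enum_val (A := mem S) (cast_ord (esym cardS) l).
exists e; split=> [l l' /enum_val_inj /cast_ord_inj //|l|].
  exact: enum_valP.
rewrite -row_free_unit /row_free -[X in _ == X]cardS -[X in _ == X]rankS.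
by apply/eqP/mxrank_colsub_img => [l|a]; [exists (cast_ord (esym cardS) l)|
  exists (cast_ord cardS a); rewrite /e cast_ordK].
Qed.

Lemma col_perm_corner_unitmx (R : fieldType) m (B : 'M[R]_m.+1) : B \in unitmx ->
  exists s : 'S_m.+1, row' ord0 (col' ord0 (col_perm s B)) \in unitmx.
Proof.
move=> uB; have [l minor_l|no_minor] := pickP (fun l => row' ord0 (col' l B) \in unitmx).
  exists (lift_perm ord0 l 1); congr (_ \in unitmx): minor_l.
  by apply/matrixP => i k; rewrite !mxE lift_perm_lift perm1.
move: uB; rewrite unitmxE unitfE (expand_det_row _ ord0) big1 ?eqxx // => l _.
have /negbT := no_minor l; rewrite unitmxE unitfE negbK => /eqP minor0.
by rewrite /cofactor minor0 !mulr0.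
Qed.

Section SchurComplement.
Variables (R : fieldType) (m : nat) (B : 'M[R]_m.+1).
Let A := row' ord0 (col' ord0 B).
Let x := row ord0 (col' ord0 B).
Let y := col ord0 (row' ord0 B).

(* Otherwise (1, -x A^-1) would be a nonzero vector in the left kernel of B. *)
Lemma schur_complement_neq0 : B \in unitmx -> A \in unitmx ->
  B ord0 ord0 - (x *m invmx A *m y) 0 0 != 0.
Proof.
move=> uB uA; apply/negP => /eqP schur0.
pose c := x *m invmx A.
pose v : 'rV[R]_m.+1 := \row_i (if unlift ord0 i is Some i' then - c 0 i' else 1).
have vB0 : v *m B = 0.
  apply/rowP => l; rewrite !mxE big_ord_recl mxE unlift_none mul1r.
  under eq_bigr => i _ do rewrite mxE liftK mulNr.
  rewrite sumrN; case: (unliftP ord0 l) => [l'|] ->.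
    have cA : (c *m A) 0 l' = x 0 l' by rewrite mulmxKV.
    have -> : B ord0 (lift ord0 l') = x 0 l' by rewrite !mxE.
    rewrite -cA mxE; apply/eqP; rewrite subr_eq0; apply/eqP/eq_bigr => i _.
    by rewrite !mxE.
  rewrite -[RHS]schur0 [in RHS]mxE; congr (_ - _); apply: eq_bigr => i _.
  by rewrite !mxE.
have /rowP/(_ ord0) := mulmxK uB v; rewrite vB0 mul0mx !mxE unlift_none.
by move/eqP; rewrite eq_sym oner_eq0.
Qed.

End SchurComplement.

Lemma F2_neq0_eq1 (a : 'F_2) : a != 0 -> a = 1.
Proof. by case: a => [[|[|a]] //= lt_a] _; apply/val_inj. Qed.

Lemma building_up_catblocks t m (B : 'I_t -> 'M['F_2]_m.+1) :
  (forall j, B j \in unitmx) -> (forall j, row' ord0 (col' ord0 (B j)) \in unitmx) ->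
  building_up (fun j => row' ord0 (col' ord0 (B j))) (fun j => row ord0 (col' ord0 (B j)))
    (fun i j => B j (lift ord0 i) ord0) = catblocks B.
Proof.
move=> uB uA; apply/matrixP => i c; rewrite !mxE; move: (blk c) (off c) => j l.
case: (unliftP ord0 i) => [i'|] ->; case: (unliftP ord0 l) => [l'|] ->;
  rewrite ?mxE //.
have /F2_neq0_eq1 := schur_complement_neq0 (uB j) (uA j).
rewrite /bu_z /bu_c => <-; rewrite [in X in _ - X]mxE.
under [X in _ - X]eq_bigr => k _ do rewrite [col _ _ _ _]mxE [row' _ _ _ _]mxE.
by rewrite subrK.
Qed.

Theorem proposition6 (t m : nat) (G : 'M['F_2]_(m.+1, t * m.+1)) :
  (2 <= t)%N -> (1 <= m)%N -> row_free G -> CIS G ->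
  exists (s : 'S_(t * m.+1)) (A : 'I_t -> 'M['F_2]_m)
         (x : 'I_t -> 'rV['F_2]_m) (y : 'I_m -> 'I_t -> 'F_2),
    (forall j, A j \in unitmx) /\
    row_free (catblocks A) /\ CIS (catblocks A) /\
    row_free (building_up A x y) /\ CIS (building_up A x y) /\
    (building_up A x y == col_perm s G)%MS.
Proof.
(* row_free G already follows from CIS G, and m = 0 would be harmless. *)
move=> t_ge2 _ _ [P infoP].
have /fin_all_exists[e eP] := fun j => info_set_enum (infoP j).
have /fin_all_exists[r rP] : forall j, exists r : 'S_m.+1,
    row' ord0 (col' ord0 (col_perm r (colsub (e j) G))) \in unitmx.
  by move=> j; have [_ _ /col_perm_corner_unitmx] := eP j.
pose B j := col_perm (r j) (colsub (e j) G).
have uB j : B j \in unitmx by rewrite col_perm_unitmx; case: (eP j).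
have [j l|j|s sE] := @perm_of_blocks t m.+1 P (fun j l => e j (r j l)).
- by have [_ /(_ (r j l))] := eP j; rewrite inE => /eqP.
- by have [e_inj _ _] := eP j; apply: inj_comp e_inj (@perm_inj _ _).
have catB : catblocks B = col_perm s G by apply/matrixP => i c; rewrite !mxE sE.
pose A j := row' ord0 (col' ord0 (B j)).
exists s, A, (fun j => row ord0 (col' ord0 (B j))), (fun i j => B j (lift ord0 i) ord0).
rewrite building_up_catblocks // -catB.
have j0 : 'I_t by exists 0%N; apply: leq_trans t_ge2.
have free_cat n (C : 'I_t -> 'M['F_2]_n) :
    (forall j, C j \in unitmx) -> row_free (catblocks C).
  by move=> uC; apply: (row_free_catblocks (j := j0)); rewrite row_free_unit.
do !split=> //; [exact: free_cat | exact: CIS_catblocks | exact: free_cat |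
  exact: CIS_catblocks | by rewrite /eqmx !submx_refl].
Qed.
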